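(* For every formula $A$ of $\mathbf{L_1}$, if not $\vdash_H A$, then $\dashv_H A$. That is, every formula satisfies $\vdash_H A$ or $\dashv_H A$.
   Context: Formulas of $\mathbf{L_1}$: built from atomic formulas $\epsilon ab$ ($a,b$ name variables, possibly equal) with primitive connectives $\vee,\sim$; $\wedge,\supset,\equiv$ defined as usual. Disjunctions may be associated in any way. $\vdash_H A$: $A$ belongs to the smallest set containing all instances of classical propositional tautologies and all formulas $\epsilon ab\supset\epsilon aa$, $(\epsilon ab\wedge\epsilon bc)\supset\epsilon ac$, $(\epsilon ab\wedge\epsilon bb)\supset\epsilon ba$, closed under modus ponens. Positive/negative parts (occurrences): $A$ is a positive part of $A$; if $B\vee C$ is a positive part then $B,C$ are positive parts; if $\sim B$ is a positive part then $B$ is a negative part; if $\sim B$ is a negative part then $B$ is a positive part. $F[B_+,B_-]$ denotes a formula in which some formula $B$ has one occurrence as positive part and another non-overlapping occurrence as negative part. Hintikka formula: a formula $H$ such that (1) $H$ is not of the form $F[B_+,B_-]$; (2) if $B\vee C$ is a negative part of $H$ then $B$ or $C$ is; (3) if $\epsilon ab$ is a negative part then so is $\epsilon aa$; (4) if $\epsilon ab,\epsilon bc$ are negative parts then so is $\epsilon ac$; (5) if $\epsilon ab,\epsilon bb$ are negative parts then so is $\epsilon ba$. $\mathbf{HAR}$: fix a name variable $a_0$; $\dashv_H$ is the smallest set such that $\dashv_H\epsilon a_0a_0$; $\dashv_H\sim\epsilon a_0a_0$; if $\vdash_H A\supset B$ and $\dashv_H B$ then $\dashv_H A$; if $\dashv_H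 A$ and $A$ is obtained from $B$ by uniform substitution of name variables for name variables then $\dashv_H B$; if $A$ is a Hintikka formula that is a disjunction of atomic or negated atomic formulas, $\dashv_H A$, and $\epsilon ab$ is not a negative part of $A$, then $\dashv_H A\vee\epsilon ab$. *)

From Stdlib Require Import List.
Import ListNotations.

Definition name := nat.

Inductive form : Type :=
| Eps : name -> name -> form
| Or  : form -> form -> form
| Not : form -> form.

Definition And (A B : form) : form := Not (Or (Not A) (Not B)).
Definition Imp (A B : form) : form := Or (Not A) B.
Definition Equiv (A B : form) : form := And (Imp A B) (Imp B A).

Inductive pform : Type :=
| PVar : nat -> pform
| POr  : pform -> pform -> pform
| PNot : pform -> pform.

Fixpoint peval (v : nat -> bool) (P : pform) : bool :=
  match P with
  | PVar n => v n
  | POr P Q => orb (peval v P) (peval v Q)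
  | PNot P => negb (peval v P)
  end.

Definition tautology (P : pform) : Prop := forall v, peval v P = true.

Fixpoint psubst (s : nat -> form) (P : pform) : form :=
  match P with
  | PVar n => s n
  | POr P Q => Or (psubst s P) (psubst s Q)
  | PNot P => Not (psubst s P)
  end.

Definition taut_instance (A : form) : Prop :=
  exists (P : pform) (s : nat -> form), tautology P /\ A = psubst s P.

Inductive provable : form -> Prop :=
| pr_taut : forall A, taut_instance A -> provable A
| pr_ax1 : forall a b, provable (Imp (Eps a b) (Eps a a))
| pr_ax2 : forall a b c, provable (Imp (And (Eps a b) (Eps b c)) (Eps a c))
| pr_ax3 : forall a b, provable (Imp (And (Eps a b) (Eps b b)) (Eps b a))
| pr_mp : forall A B, provable (Imp A B) -> provable A -> provable B.

(* Occurrences are addressed by paths from the root. *)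
Inductive dir : Type := DL | DR | DN.
Definition path := list dir.

(* part A p B pol : the occurrence of B at path p is a positive part of A
   (pol = true) or a negative part of A (pol = false), following the
   paper's inductive definition literally. *)
Inductive part (A : form) : path -> form -> bool -> Prop :=
| part_self : part A [] A true
| part_orl : forall p B C, part A p (Or B C) true -> part A (p ++ [DL]) B true
| part_orr : forall p B C, part A p (Or B C) true -> part A (p ++ [DR]) C true
| part_not : forall p B s, part A p (Not B) s -> part A (p ++ [DN]) B (negb s).

Definition pos_part (A : form) (p : path) (B : form) := part A p B true.
Definition neg_part (A : form) (p : path) (B : form) := part A p B false.

Definition is_neg_part (A B : form) : Prop := exists p, neg_part A p B.

Definition non_overlapping (p q : path) : Prop :=
  (~ exists r, q = p ++ r) /\ (~ exists r, p = q ++ r).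

(* A is of the form F[B_+, B_-]. *)
Definition has_pos_neg (A : form) : Prop :=
  exists B p q, pos_part A p B /\ neg_part A q B /\ non_overlapping p q.

Definition hintikka (H : form) : Prop :=
  ~ has_pos_neg H /\
  (forall B C, is_neg_part H (Or B C) -> is_neg_part H B \/ is_neg_part H C) /\
  (forall a b, is_neg_part H (Eps a b) -> is_neg_part H (Eps a a)) /\
  (forall a b c, is_neg_part H (Eps a b) -> is_neg_part H (Eps b c) ->
                 is_neg_part H (Eps a c)) /\
  (forall a b, is_neg_part H (Eps a b) -> is_neg_part H (Eps b b) ->
               is_neg_part H (Eps b a)).

Inductive lit_disj : form -> Prop :=
| ld_atom : forall a b, lit_disj (Eps a b)
| ld_natom : forall a b, lit_disj (Not (Eps a b))
| ld_or : forall A B, lit_disj A -> lit_disj B -> lit_disj (Or A B).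

Fixpoint nsubst (s : name -> name) (A : form) : form :=
  match A with
  | Eps a b => Eps (s a) (s b)
  | Or A B => Or (nsubst s A) (nsubst s B)
  | Not A => Not (nsubst s A)
  end.

Inductive rejected (a0 : name) : form -> Prop :=
| rj_aa : rejected a0 (Eps a0 a0)
| rj_naa : rejected a0 (Not (Eps a0 a0))
| rj_mp : forall A B, provable (Imp A B) -> rejected a0 B -> rejected a0 A
| rj_subst : forall (s : name -> name) B,
    rejected a0 (nsubst s B) -> rejected a0 B
| rj_ext : forall A a b,
    hintikka A -> lit_disj A -> rejected a0 A -> ~ is_neg_part A (Eps a b) ->
    rejected a0 (Or A (Eps a b)).

From Stdlib Require Import List Bool Arith Classical Cantor.
Import ListNotations.

(* Interpret the atoms eps a b by a valuation w; call w
      admissible when the relation it defines obeys the three axioms of L1.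
      A formula true under every valuation is a tautology instance, hence
      provable; chaining finitely many axiom instances (those over the names
      of A) yields completeness: A true under all admissible valuations is
      provable.  So an unprovable A has an admissible countermodel V.
   2. Disjunctions of literals.  For such a formula, negative parts are
      exactly the atoms of its negated disjuncts, which gives a simple
      criterion for being a Hintikka formula.
   3. Rejection.  Over the names of A, let T be the pairs true under V and F
      the false ones.  If T is empty, A is refuted by the constant-false
      valuation and is rejected through the substitution a |-> a0.  Otherwise
      D = \/ {~eps a b | (a,b) in T} is rejected (again through a |-> a0) and
      is Hintikka; adding the atoms eps a b, (a,b) in F, one at a time by the
      extension rule of HAR gives a rejected formula E with A -> E provable,
      so A is rejected. *)

Fixpoint ev (w : name -> name -> bool) (A : form) : bool :=
  match A with
  | Eps a b => w a b
  | Or A B => ev w A || ev w B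
  | Not A => negb (ev w A)
  end.

Lemma ev_nsubst (w : name -> name -> bool) (s : name -> name) (A : form) :
  ev w (nsubst s A) = ev (fun a b => w (s a) (s b)) A.
Proof. induction A; simpl; congruence. Qed.

Fixpoint skeleton (A : form) : pform :=
  match A with
  | Eps a b => PVar (Cantor.to_nat (a, b))
  | Or A B => POr (skeleton A) (skeleton B)
  | Not A => PNot (skeleton A)
  end.

Definition atom_of_code (n : nat) : form := let '(a, b) := Cantor.of_nat n in Eps a b.

Lemma skeleton_instance (A : form) : psubst atom_of_code (skeleton A) = A.
Proof.
  induction A as [a b | A IHA B IHB | A IHA]; simpl; try congruence.
  change (atom_of_code (Cantor.to_nat (a, b)) = Eps a b).
  unfold atom_of_code. now rewrite Cantor.cancel_of_to.
Qed.

Lemma peval_skeleton (v : nat -> bool) (A : form) :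
  peval v (skeleton A) = ev (fun a b => v (Cantor.to_nat (a, b))) A.
Proof. induction A; cbn [peval skeleton ev]; congruence. Qed.

Lemma valid_provable (A : form) : (forall w, ev w A = true) -> provable A.
Proof.
  intros Hvalid. apply pr_taut. exists (skeleton A), atom_of_code. split.
  - intro v. rewrite peval_skeleton. apply Hvalid.
  - symmetry. apply skeleton_instance.
Qed.

Fixpoint names (A : form) : list name :=
  match A with
  | Eps a b => [a; b]
  | Or A B => names A ++ names B
  | Not A => names A
  end.

Lemma ev_agree (A : form) (w w' : name -> name -> bool) :
  (forall a b, In a (names A) -> In b (names A) -> w a b = w' a b) ->
  ev w A = ev w' A.
Proof.
  induction A as [a b | A IHA B IHB | A IHA]; simpl; intros Hw.
  - apply Hw; simpl; auto.
  - rewrite IHA, IHB; auto; intros a b Ha Hb; apply Hw; apply in_or_app; auto.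
  - now rewrite IHA.
Qed.

Definition eps_closed (N : name -> name -> Prop) : Prop :=
  (forall a b, N a b -> N a a) /\
  (forall a b c, N a b -> N b c -> N a c) /\
  (forall a b, N a b -> N b b -> N b a).

Lemma eps_closed_iff (N N' : name -> name -> Prop) :
  (forall a b, N a b <-> N' a b) -> eps_closed N -> eps_closed N'.
Proof.
  intros E (H1 & H2 & H3). split; [|split]; intros *; rewrite <- !E; eauto.
Qed.

Definition admissible (V : name -> name -> bool) : Prop :=
  eps_closed (fun a b => V a b = true).

Definition ax_refl (a b : name) : form := Imp (Eps a b) (Eps a a).
Definition ax_trans (a b c : name) : form := Imp (And (Eps a b) (Eps b c)) (Eps a c).
Definition ax_sym (a b : name) : form := Imp (And (Eps a b) (Eps b b)) (Eps b a).

Definition axioms (L : list name) : list form :=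
  flat_map (fun a => flat_map (fun b =>
    ax_refl a b :: ax_sym a b :: map (ax_trans a b) L) L) L.

Lemma axioms_provable (L : list name) (F : form) : In F (axioms L) -> provable F.
Proof.
  unfold axioms. intros HF.
  apply in_flat_map in HF as (a & _ & HF). apply in_flat_map in HF as (b & _ & HF).
  destruct HF as [<- | [<- | HF]]; [apply pr_ax1 | apply pr_ax3 |].
  apply in_map_iff in HF as (c & <- & _). apply pr_ax2.
Qed.

Lemma axioms_complete (L : list name) (a b c : name) :
  In a L -> In b L -> In c L ->
  In (ax_refl a b) (axioms L) /\ In (ax_trans a b c) (axioms L) /\
  In (ax_sym a b) (axioms L).
Proof.
  intros Ha Hb Hc.
  assert (Hab : forall F, In F (ax_refl a b :: ax_sym a b :: map (ax_trans a b) L) ->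
                          In F (axioms L)).
  { intros F HF. apply in_flat_map. exists a. split; auto.
    apply in_flat_map. exists b. auto. }
  split; [|split]; apply Hab; simpl; auto using in_map.
Qed.

Definition restrict (L : list name) (w : name -> name -> bool) (a b : name) : bool :=
  w a b && existsb (Nat.eqb a) L && existsb (Nat.eqb b) L.

Lemma existsb_eqb (L : list name) (a : name) : existsb (Nat.eqb a) L = true <-> In a L.
Proof.
  rewrite existsb_exists. split.
  - intros (x & Hx & E). apply Nat.eqb_eq in E. now subst.
  - intros Ha. exists a. split; auto. apply Nat.eqb_refl.
Qed.

Lemma restrict_true (L : list name) (w : name -> name -> bool) (a b : name) :
  restrict L w a b = true <-> w a b = true /\ In a L /\ In b L.
Proof. unfold restrict. rewrite !andb_true_iff, !existsb_eqb. tauto. Qed.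

Lemma restrict_admissible (L : list name) (w : name -> name -> bool) :
  (forall F, In F (axioms L) -> ev w F = true) -> admissible (restrict L w).
Proof.
  intros Hax.
  split; [|split]; intros *; rewrite !restrict_true.
  - intros (E & Ha & Hb). destruct (axioms_complete L a b a Ha Hb Ha) as (H & _).
    apply Hax in H. simpl in H. rewrite E in H. auto.
  - intros (E1 & Ha & Hb) (E2 & _ & Hc).
    destruct (axioms_complete L a b c Ha Hb Hc) as (_ & H & _).
    apply Hax in H. simpl in H. rewrite E1, E2 in H. auto.
  - intros (E1 & Ha & Hb) (E2 & _).
    destruct (axioms_complete L a b a Ha Hb Ha) as (_ & _ & H).
    apply Hax in H. simpl in H. rewrite E1, E2 in H. auto.
Qed.

Fixpoint imps (l : list form) (A : form) : form :=
  match l with [] => A | F :: l => Imp F (imps l A) end.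

Lemma imps_mp (l : list form) (A : form) :
  (forall F, In F l -> provable F) -> provable (imps l A) -> provable A.
Proof.
  induction l as [|F l IH]; simpl; intros Hl HA; auto.
  apply IH; auto. apply (pr_mp F); auto.
Qed.

Lemma ev_imps (w : name -> name -> bool) (l : list form) (A : form) :
  ((forall F, In F l -> ev w F = true) -> ev w A = true) -> ev w (imps l A) = true.
Proof.
  induction l as [|F l IH]; simpl; intros H.
  - apply H. intros _ [].
  - destruct (ev w F) eqn:EF; simpl; auto.
    apply IH. intros Hl. apply H. intros G [<- | HG]; auto.
Qed.

Lemma completeness (A : form) : (forall V, admissible V -> ev V A = true) -> provable A.
Proof.
  intros HA. apply (imps_mp (axioms (names A))); [apply axioms_provable |].
  apply valid_provable. intro w. apply ev_imps. intros Hax.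
  rewrite (ev_agree A w (restrict (names A) w)).
  - now apply HA, restrict_admissible.
  - intros a b Ha Hb. unfold restrict.
    apply existsb_eqb in Ha, Hb. now rewrite Ha, Hb, !andb_true_r.
Qed.

Lemma countermodel (A : form) :
  ~ provable A -> exists V, admissible V /\ ev V A = false.
Proof.
  intros HnA. apply NNPP. intros Hno. apply HnA, completeness.
  intros V HV. destruct (ev V A) eqn:E; auto. exfalso. eauto.
Qed.

Fixpoint lits (X : form) : list form :=
  match X with Or X Y => lits X ++ lits Y | _ => [X] end.

Definition neg_atom (X : form) (a b : name) : Prop := In (Not (Eps a b)) (lits X).

Definition clash_free (X : form) : Prop :=
  forall a b, In (Eps a b) (lits X) -> ~ neg_atom X a b.

Lemma part_lit_disj (X : form) (p : path) (B : form) (pol : bool) :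
  part X p B pol -> lit_disj X ->
  if pol then lit_disj B /\ incl (lits B) (lits X)
  else exists a b, B = Eps a b /\ neg_atom X a b.
Proof.
  induction 1 as [| p B C _ IH | p B C _ IH | p B [|] _ IH]; intros HX.
  - split; auto using incl_refl.
  - destruct (IH HX) as [HBC Hi]. inversion HBC; subst.
    split; auto. intros L HL. apply Hi. simpl. apply in_or_app. auto.
  - destruct (IH HX) as [HBC Hi]. inversion HBC; subst.
    split; auto. intros L HL. apply Hi. simpl. apply in_or_app. auto.
  - destruct (IH HX) as [HB Hi]. inversion HB; subst.
    exists a, b. split; auto. apply Hi. simpl. auto.
  - destruct (IH HX) as (a & b & E & _). discriminate.
Qed.

Lemma lits_pos_part (X : form) (p : path) (Y L : form) :
  part X p Y true -> lit_disj Y -> In L (lits Y) -> exists q, pos_part X q L.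
Proof.
  intros HY HlY. revert p HY. induction HlY as [a b | a b | Y Z _ IHY _ IHZ];
    simpl; intros p HY HL.
  - destruct HL as [<- | []]. eauto.
  - destruct HL as [<- | []]. eauto.
  - apply in_app_or in HL as [HL | HL].
    + apply (IHY (p ++ [DL])); auto. eapply part_orl; eauto.
    + apply (IHZ (p ++ [DR])); auto. eapply part_orr; eauto.
Qed.

Lemma neg_part_lit_disj (X B : form) :
  lit_disj X -> is_neg_part X B -> exists a b, B = Eps a b /\ neg_atom X a b.
Proof. intros HX [p Hp]. exact (part_lit_disj X p B false Hp HX). Qed.

Lemma neg_part_iff (X : form) (a b : name) :
  lit_disj X -> is_neg_part X (Eps a b) <-> neg_atom X a b.
Proof.
  intros HX. split.
  - intros Hn. destruct (neg_part_lit_disj X _ HX Hn) as (a' & b' & E & H).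
    now injection E as -> ->.
  - intros Hn. destruct (lits_pos_part X [] X _ (part_self X) HX Hn) as [q Hq].
    exists (q ++ [DN]). exact (part_not X q (Eps a b) true Hq).
Qed.

Lemma hintikka_lit_disj (X : form) :
  lit_disj X -> eps_closed (neg_atom X) -> clash_free X -> hintikka X.
Proof.
  intros HX Hcl Hclash.
  assert (Hneg : eps_closed (fun a b => is_neg_part X (Eps a b))).
  { apply (eps_closed_iff (neg_atom X)); auto.
    intros a b. symmetry. now apply neg_part_iff. }
  destruct Hneg as (H1 & H2 & H3).
  split; [|split; [|split; [|split]]]; auto.
  - intros (B & p & q & Hp & Hq & _).
    destruct (neg_part_lit_disj X B HX (ex_intro _ q Hq)) as (a & b & -> & Hn).
    destruct (part_lit_disj X p _ true Hp HX) as [_ Hi].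
    apply (Hclash a b); auto. apply Hi. simpl. auto.
  - intros B C Hn. destruct (neg_part_lit_disj X _ HX Hn) as (a & b & E & _).
    discriminate.
Qed.

Definition pos_lit (p : name * name) : form := Eps (fst p) (snd p).
Definition neg_lit (p : name * name) : form := Not (pos_lit p).

Definition extend (lit : name * name -> form) (X : form) (l : list (name * name)) : form :=
  fold_left (fun Y p => Or Y (lit p)) l X.

Lemma lits_extend (lit : name * name -> form) (X : form) (l : list (name * name)) :
  (forall p, lits (lit p) = [lit p]) -> lits (extend lit X l) = lits X ++ map lit l.
Proof.
  intros Hlit. revert X. induction l as [|p l IH]; intros X; simpl.
  - now rewrite app_nil_r.
  - unfold extend in *. simpl. rewrite IH. simpl. rewrite Hlit, <- app_assoc. reflexivity.
Qed.

Lemma ev_extend (w : name -> name -> bool) (lit : name * name -> form)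
  (X : form) (l : list (name * name)) :
  ev w (extend lit X l) = ev w X || existsb (fun p => ev w (lit p)) l.
Proof.
  revert X. induction l as [|p l IH]; intros X; simpl.
  - now rewrite orb_false_r.
  - unfold extend in *. simpl. rewrite IH. simpl. now rewrite orb_assoc.
Qed.

Lemma lit_disj_extend (lit : name * name -> form) (X : form) (l : list (name * name)) :
  (forall p, lit_disj (lit p)) -> lit_disj X -> lit_disj (extend lit X l).
Proof.
  intros Hlit. revert X. induction l as [|p l IH]; intros X HX; simpl; auto.
  apply IH. now constructor.
Qed.

Lemma existsb_false {T : Type} (f : T -> bool) (l : list T) :
  existsb f l = false -> forall x, In x l -> f x = false.
Proof.
  intros E x Hx. destruct (f x) eqn:Ex; auto.
  rewrite <- E. symmetry. apply existsb_exists. eauto.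
Qed.

Definition seed (a0 : name) (c : bool) : form :=
  if c then Not (Eps a0 a0) else Eps a0 a0.

(* A formula falsified by a constant valuation is rejected: under a |-> a0 it
   implies the seed that is false exactly when eps a0 a0 takes that value. *)
Lemma rejected_of_constant (a0 : name) (c : bool) (B : form) :
  ev (fun _ _ => c) B = false -> rejected a0 B.
Proof.
  intros HB. apply (rj_subst a0 (fun _ => a0)).
  apply (rj_mp a0 _ (seed a0 c)); [| destruct c; constructor].
  apply valid_provable. intro w. simpl. rewrite ev_nsubst.
  destruct c, (w a0 a0) eqn:E; simpl; rewrite ?E, ?HB, ?orb_true_r; reflexivity.
Qed.

(* Iterating the extension rule of HAR: positive atoms that do not occur
   negated may be added to a rejected Hintikka disjunction of literals. *)
Lemma rejected_extend (a0 : name) (l : list (name * name)) (X : form) :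
  rejected a0 X -> lit_disj X -> eps_closed (neg_atom X) -> clash_free X ->
  (forall a b, In (a, b) l -> ~ neg_atom X a b) ->
  rejected a0 (extend pos_lit X l).
Proof.
  revert X. induction l as [|[a b] l IH]; intros X HR HX Hcl Hclash Hl; auto.
  assert (Hsame : forall c d, neg_atom (Or X (Eps a b)) c d <-> neg_atom X c d).
  { intros c d. unfold neg_atom. simpl. rewrite in_app_iff. simpl.
    intuition discriminate. }
  apply IH.
  - apply rj_ext; auto using hintikka_lit_disj.
    rewrite neg_part_iff by auto. apply Hl. simpl. auto.
  - constructor; auto. constructor.
  - apply (eps_closed_iff (neg_atom X)); auto. intros. now rewrite Hsame.
  - intros c d Hp. rewrite Hsame. simpl in Hp. apply in_app_or in Hp as [Hp | [E | []]].
    + auto.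
    + injection E as -> ->. apply Hl. simpl. auto.
  - intros c d Hp. rewrite Hsame. apply Hl. simpl. auto.
Qed.

Definition pairs_where (f : name -> name -> bool) (L : list name) : list (name * name) :=
  filter (fun p => f (fst p) (snd p)) (list_prod L L).

Lemma in_pairs_where (f : name -> name -> bool) (L : list name) (a b : name) :
  In (a, b) (pairs_where f L) <-> In a L /\ In b L /\ f a b = true.
Proof. unfold pairs_where. rewrite filter_In, in_prod_iff. simpl. tauto. Qed.

Lemma eps_closed_pairs (V : name -> name -> bool) (L : list name) :
  admissible V -> eps_closed (fun a b => In (a, b) (pairs_where V L)).
Proof.
  intros (H1 & H2 & H3). split; [|split]; intros *; rewrite !in_pairs_where;
    intuition eauto.
Qed.

Lemma falsified_by_pattern (V w : name -> name -> bool) (A : form) :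
  ev V A = false ->
  (forall p, In p (pairs_where V (names A)) -> ev w (pos_lit p) = true) ->
  (forall p, In p (pairs_where (fun a b => negb (V a b)) (names A)) ->
     ev w (pos_lit p) = false) ->
  ev w A = false.
Proof.
  intros HA HT HF. rewrite <- HA. apply ev_agree. intros a b Ha Hb.
  destruct (V a b) eqn:E.
  - apply (HT (a, b)). apply in_pairs_where. auto.
  - apply (HF (a, b)). apply in_pairs_where. rewrite E. auto.
Qed.

(* ~eps p \/ ~eps q1 \/ ... \/ ~eps qn: the negated atoms true in a countermodel. *)
Definition neg_disj (p : name * name) (T : list (name * name)) : form :=
  extend neg_lit (neg_lit p) T.

Lemma lits_neg_disj (p : name * name) (T : list (name * name)) :
  lits (neg_disj p T) = map neg_lit (p :: T).
Proof. now apply lits_extend. Qed.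

Lemma neg_atom_neg_disj (p : name * name) (T : list (name * name)) (a b : name) :
  neg_atom (neg_disj p T) a b <-> In (a, b) (p :: T).
Proof.
  unfold neg_atom. rewrite lits_neg_disj, in_map_iff. split.
  - intros ([c d] & E & H). now injection E as -> ->.
  - intros H. now exists (a, b).
Qed.

Lemma clash_free_neg_disj (p : name * name) (T : list (name * name)) :
  clash_free (neg_disj p T).
Proof.
  intros a b Hp. rewrite lits_neg_disj, in_map_iff in Hp.
  destruct Hp as (q & E & _). discriminate.
Qed.

(* It is falsified by the constant-true valuation, hence rejected. *)
Lemma rejected_neg_disj (a0 : name) (p : name * name) (T : list (name * name)) :
  rejected a0 (neg_disj p T).
Proof.
  apply (rejected_of_constant a0 true). unfold neg_disj. rewrite ev_extend. simpl.
  apply not_true_iff_false. rewrite existsb_exists. intros (q & _ & E).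
  discriminate.
Qed.

Lemma ev_neg_disj_false (w : name -> name -> bool) (p : name * name)
  (T : list (name * name)) :
  ev w (neg_disj p T) = false -> forall q, In q (p :: T) -> ev w (pos_lit q) = true.
Proof.
  unfold neg_disj. rewrite ev_extend, orb_false_iff. intros [Ep ET] q [<- | Hq].
  - simpl in Ep. now apply negb_false_iff.
  - apply negb_false_iff. exact (existsb_false _ _ ET q Hq).
Qed.

(* The main case: the countermodel V makes some atom over the names of A true.
   Then A implies D \/ eps q1 \/ ... \/ eps qm, where D lists the true atoms
   negated and the qi are the false ones; this formula is rejected. *)
Lemma rejected_of_countermodel (a0 : name) (V : name -> name -> bool) (A : form)
  (p : name * name) (T : list (name * name)) :
  admissible V -> ev V A = false -> pairs_where V (names A) = p :: T ->
  rejected a0 A.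
Proof.
  intros HV HA ET.
  set (F := pairs_where (fun a b => negb (V a b)) (names A)).
  assert (Hneg : forall a b, neg_atom (neg_disj p T) a b <->
                             In (a, b) (pairs_where V (names A))).
  { intros a b. now rewrite neg_atom_neg_disj, ET. }
  apply (rj_mp a0 A (extend pos_lit (neg_disj p T) F)).
  - apply valid_provable. intro w. simpl.
    destruct (ev w (extend pos_lit (neg_disj p T) F)) eqn:E; [apply orb_true_r |].
    rewrite ev_extend, orb_false_iff in E. destruct E as [ED EF].
    rewrite (falsified_by_pattern V w A); auto.
    + rewrite ET. exact (ev_neg_disj_false w p T ED).
    + exact (existsb_false _ _ EF).
  - apply rejected_extend.
    + apply rejected_neg_disj.
    + apply lit_disj_extend; repeat constructor.
    + apply (eps_closed_iff (fun a b => In (a, b) (pairs_where V (names A)))).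
      * intros. now rewrite Hneg.
      * now apply eps_closed_pairs.
    + apply clash_free_neg_disj.
    + intros a b HF Hn. apply Hneg, in_pairs_where in Hn.
      apply in_pairs_where in HF. destruct HF as (_ & _ & E1), Hn as (_ & _ & E2).
      rewrite E2 in E1. discriminate.
Qed.

Theorem theorem3p2 : forall (a0 : name) (A : form),
  ~ provable A -> rejected a0 A.
Proof.
  intros a0 A HnA.
  destruct (countermodel A HnA) as (V & HV & HA).
  destruct (pairs_where V (names A)) as [| p T] eqn:ET.
  - (* no atom over the names of A is true: the constant-false valuation refutes A *)
    apply (rejected_of_constant a0 false).
    apply (falsified_by_pattern V); auto.
    rewrite ET. intros _ [].
  - exact (rejected_of_countermodel a0 V A p T HV HA ET).
Qed.
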